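(* For all odd integers $n\ge1$ and real numbers $a\ge1$, $x\in(0,\pi)$, we have $S_{n,a}(x)\ge\sin(x)$. Equality holds if and only if $n=1$, or $n=3$, $a=1$, $x=2\pi/3$.
   Context: For a real number $a$ and integers $0\le m$, $\binom{m+a}{m}=\frac{(a+1)(a+2)\cdots(a+m)}{m!}$ (equal to $1$ when $m=0$). For an integer $n\ge1$, $S_{n,a}(x)=\sum_{j=1}^n\binom{n+a-j}{n-j}\sin(jx)$. *)

From Stdlib Require Import Reals Lra Lia Factorial.
Open Scope R_scope.

Fixpoint rise_prod (a : R) (m : nat) : R :=
  match m with
  | O => 1
  | S k => rise_prod a k * (a + INR (S k))
  end.

(* Generalized binomial coefficient  binom(m+a, m) = (a+1)...(a+m)/m!. *)
Definition gbinom (m : nat) (a : R) : R := rise_prod a m / INR (fact m).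

Definition S_na (n : nat) (a x : R) : R :=
  sum_f 1 n (fun j => gbinom (n - j) a * sin (INR j * x)).

(* Write g_b(k) = binom(k+b, k), so that S_{n,a}(x) is the n-th coefficient of the
   Cauchy product of g_a with j |-> sin(j x).  The backward difference maps g_b to
   g_(b-1), and it maps the gap K(m) = (m+1) sin x - sin((m+1) x) twice onto
   2 (1 - cos x) sin(m x).  Moving both differences across the Cauchy product gives
     2 (1 - cos x) (S_{n,a}(x) - sin x) = sum_(j<n) g_(a-2)(n-j) K(j) + K(n) - K(1),
   where every g_(a-2)(k) and every K(j) is nonnegative for a >= 1 and 0 < x < pi,
   and K(2m+1) - K(1) = 2 (m sin x - cos((m+2) x) sin(m x)) >= 0 because
   |sin(m x)| <= m sin x.  Equality forces both parts to vanish, which only happens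
   for n = 1, or for n = 3 with a = 1 and cos(3x) = 1. *)

From Stdlib Require Import Reals Lra Lia Factorial.
Open Scope R_scope.

Definition bdiff (u : nat -> R) (k : nat) : R :=
  u k - match k with O => 0 | S k' => u k' end.

Lemma bdiff_ext (u v : nat -> R) (k : nat) :
  (forall j, u j = v j) -> bdiff u k = bdiff v k.
Proof. intros Huv; unfold bdiff; destruct k; rewrite !Huv; reflexivity. Qed.

Definition cauchy (u v : nat -> R) (n : nat) : R :=
  sum_f_R0 (fun j => u (n - j)%nat * v j) n.

Lemma cauchy_ext (u u' v v' : nat -> R) (n : nat) :
  (forall k, u k = u' k) -> (forall k, v k = v' k) -> cauchy u v n = cauchy u' v' n.
Proof. intros Hu Hv; unfold cauchy; apply sum_eq; intros; rewrite Hu, Hv; reflexivity. Qed.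

Lemma cauchy_scalr (u v : nat -> R) (r : R) (n : nat) :
  cauchy u (fun j => r * v j) n = r * cauchy u v n.
Proof. unfold cauchy; rewrite scal_sum; apply sum_eq; intros; ring. Qed.

Lemma cauchy_bdiffl (u v : nat -> R) (n : nat) :
  cauchy (bdiff u) v (S n) = cauchy u v (S n) - cauchy u v n.
Proof.
  unfold cauchy; rewrite !tech5, Nat.sub_diag.
  rewrite (sum_eq _ (fun j => u (S n - j)%nat * v j - u (n - j)%nat * v j)).
  - rewrite minus_sum; unfold bdiff; ring.
  - intros j Hj; rewrite (Nat.sub_succ_l j n Hj); unfold bdiff; ring.
Qed.

Lemma cauchy_bdiffr (u v : nat -> R) (n : nat) :
  cauchy u (bdiff v) (S n) = cauchy u v (S n) - cauchy u v n.
Proof.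
  unfold cauchy.
  rewrite (sum_eq _ (fun j => u (S n - j)%nat * v j
                       - u (S n - j)%nat * match j with O => 0 | S j' => v j' end))
    by (intros; unfold bdiff; ring).
  rewrite minus_sum, (decomp_sum (fun j => _ * match j with O => 0 | S j' => v j' end))
    by lia.
  rewrite (sum_eq (fun j => u (S n - S j)%nat * v j) (fun j => u (n - j)%nat * v j))
    by reflexivity.
  simpl pred; ring.
Qed.

(* Both sides are the coefficients of (1 - X) U V. *)
Lemma cauchy_bdiff_swap (u v : nat -> R) (n : nat) :
  cauchy (bdiff u) v n = cauchy u (bdiff v) n.
Proof.
  destruct n as [|n].
  - unfold cauchy, bdiff; simpl; ring.
  - rewrite cauchy_bdiffl, cauchy_bdiffr; reflexivity.
Qed.

Lemma gbinom_0 (b : R) : gbinom 0 b = 1.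
Proof. unfold gbinom; simpl; field. Qed.

Lemma gbinom_1 (b : R) : gbinom 1 b = b + 1.
Proof. unfold gbinom; simpl; field. Qed.

Lemma rise_prod_pred (b : R) (k : nat) : rise_prod (b - 1) (S k) = b * rise_prod b k.
Proof.
  induction k as [|k IH]; [simpl; ring|].
  change (rise_prod (b - 1) (S k) * (b - 1 + INR (S (S k)))
          = b * (rise_prod b k * (b + INR (S k)))).
  rewrite IH, (S_INR (S k)); ring.
Qed.

Lemma bdiff_gbinom (b : R) (k : nat) : bdiff (fun k => gbinom k b) k = gbinom k (b - 1).
Proof.
  unfold bdiff, gbinom; destruct k as [|k]; [simpl; ring|].
  rewrite rise_prod_pred.
  change (rise_prod b (S k)) with (rise_prod b k * (b + INR (S k))).
  change (fact (S k)) with (S k * fact k)%nat.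
  rewrite mult_INR, S_INR.
  pose proof (INR_fact_lt_0 k); pose proof (pos_INR k).
  field; split; lra.
Qed.

Lemma gbinom_nonneg (b : R) (k : nat) : -1 <= b -> 0 <= gbinom k b.
Proof.
  intros Hb; unfold gbinom.
  apply Rmult_le_pos; [| left; apply Rinv_0_lt_compat, INR_fact_lt_0].
  induction k as [|k IH]; cbn [rise_prod]; [lra|].
  apply Rmult_le_pos; [exact IH|]; rewrite S_INR; pose proof (pos_INR k); lra.
Qed.

Lemma gbinom_m1 (k : nat) : gbinom (S k) (-1) = 0.
Proof.
  unfold gbinom; induction k as [|k IH].
  - simpl; field.
  - change (rise_prod (-1) (S k) * (-1 + INR (S (S k))) / INR (fact (S (S k))) = 0).
    assert (Hr : rise_prod (-1) (S k) = 0).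
    { apply Rmult_eq_reg_r with (/ INR (fact (S k))); [lra|].
      apply Rinv_neq_0_compat, INR_fact_neq_0. }
    rewrite Hr; unfold Rdiv; ring.
Qed.

Lemma Rabs_sin_succ_le (k : nat) (x : R) :
  Rabs (sin (INR (S k) * x)) <= Rabs (sin (INR k * x)) * Rabs (cos x) + Rabs (sin x).
Proof.
  rewrite S_INR, Rmult_plus_distr_r, Rmult_1_l, sin_plus.
  eapply Rle_trans; [apply Rabs_triang|]; rewrite !Rabs_mult.
  apply Rplus_le_compat_l.
  pose proof (Rabs_pos (sin x)); pose proof (COS_bound (INR k * x)).
  assert (Rabs (cos (INR k * x)) <= 1) by (apply Rabs_le; lra).
  nra.
Qed.

Lemma Rabs_sin_mult_le (k : nat) (x : R) : Rabs (sin (INR k * x)) <= INR k * Rabs (sin x).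
Proof.
  induction k as [|k IH].
  - simpl; rewrite Rmult_0_l, sin_0, Rabs_R0; lra.
  - pose proof (Rabs_sin_succ_le k x); pose proof (Rabs_pos (sin (INR k * x))).
    pose proof (COS_bound x); assert (Rabs (cos x) <= 1) by (apply Rabs_le; lra).
    assert (Rabs (sin (INR k * x)) * Rabs (cos x) <= Rabs (sin (INR k * x))) by nra.
    replace (INR (S k) * Rabs (sin x)) with (INR k * Rabs (sin x) + Rabs (sin x))
      by (rewrite S_INR; ring).
    lra.
Qed.

Lemma Rabs_sin_mult_lt (k : nat) (x : R) :
  sin x <> 0 -> (2 <= k)%nat -> Rabs (sin (INR k * x)) < INR k * Rabs (sin x).
Proof.
  intros Hs Hk; destruct k as [|k]; [lia|].
  pose proof (Rabs_sin_succ_le k x); pose proof (Rabs_sin_mult_le k x).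
  assert (Hk1 : 1 <= INR k) by (apply (le_INR 1); lia).
  assert (Hsx : 0 < Rabs (sin x)) by (apply Rabs_pos_lt; exact Hs).
  assert (Hcx : Rabs (cos x) < 1).
  { pose proof (sin2_cos2 x); unfold Rsqr in *; pose proof (COS_bound x).
    apply Rabs_def1; nra. }
  pose proof (Rabs_pos (cos x)).
  assert (Rabs (sin (INR k * x)) * Rabs (cos x) <= INR k * Rabs (sin x) * Rabs (cos x))
    by (apply Rmult_le_compat_r; lra).
  assert (INR k * Rabs (sin x) * Rabs (cos x) < INR k * Rabs (sin x))
    by (assert (0 < INR k * Rabs (sin x)) by nra; nra).
  replace (INR (S k) * Rabs (sin x)) with (INR k * Rabs (sin x) + Rabs (sin x))
    by (rewrite S_INR; ring).
  lra.
Qed.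

Definition sin_gap (x : R) (m : nat) : R := INR (S m) * sin x - sin (INR (S m) * x).

Lemma sin_gap_0 (x : R) : sin_gap x 0 = 0.
Proof. unfold sin_gap; simpl INR; rewrite !Rmult_1_l; ring. Qed.

Lemma sin_gap_1 (x : R) : sin_gap x 1 = 2 * (1 - cos x) * sin x.
Proof. unfold sin_gap; replace (INR 2) with 2 by (simpl; ring); rewrite sin_2a; ring. Qed.

Lemma sin_gap_nonneg (x : R) (m : nat) : 0 <= sin x -> 0 <= sin_gap x m.
Proof.
  intros Hs; unfold sin_gap; pose proof (Rabs_sin_mult_le (S m) x) as H.
  rewrite (Rabs_right (sin x)) in H by lra.
  pose proof (Rle_abs (sin (INR (S m) * x))); lra.
Qed.

Lemma sin_gap_pos (x : R) (m : nat) : 0 < sin x -> (1 <= m)%nat -> 0 < sin_gap x m.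
Proof.
  intros Hs Hm; unfold sin_gap.
  pose proof (Rabs_sin_mult_lt (S m) x ltac:(lra) ltac:(lia)) as H.
  rewrite (Rabs_right (sin x)) in H by lra.
  pose proof (Rle_abs (sin (INR (S m) * x))); lra.
Qed.

Lemma bdiff2_sin_gap (x : R) (m : nat) :
  bdiff (bdiff (sin_gap x)) m = 2 * (1 - cos x) * sin (INR m * x).
Proof.
  destruct m as [|[|m]]; unfold bdiff.
  - rewrite sin_gap_0; simpl INR; rewrite Rmult_0_l, sin_0; ring.
  - rewrite sin_gap_0, sin_gap_1; simpl INR; rewrite Rmult_1_l; ring.
  - unfold sin_gap; rewrite !S_INR; set (t := (INR m + 1 + 1) * x).
    replace ((INR m + 1 + 1 + 1) * x) with (t + x) by (unfold t; ring).
    replace ((INR m + 1) * x) with (t - x) by (unfold t; ring).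
    rewrite sin_plus, sin_minus; ring.
Qed.

Lemma sin_gap_odd_sub (x : R) (m : nat) :
  sin_gap x (2 * m + 1) - sin_gap x 1
  = 2 * (INR m * sin x - cos ((INR m + 2) * x) * sin (INR m * x)).
Proof.
  unfold sin_gap.
  replace (INR (S (2 * m + 1))) with (2 * INR m + 2)
    by (rewrite S_INR, plus_INR, mult_INR; simpl; ring).
  replace (INR 2) with 2 by (simpl; ring).
  replace ((2 * INR m + 2) * x) with ((INR m + 2) * x + INR m * x) by ring.
  replace (2 * x) with ((INR m + 2) * x - INR m * x) by ring.
  rewrite sin_plus, sin_minus; ring.
Qed.

Lemma sin_gap_odd_sub_ge0 (x : R) (m : nat) :
  0 <= sin x -> 0 <= sin_gap x (2 * m + 1) - sin_gap x 1.
Proof.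
  intros Hs; rewrite sin_gap_odd_sub.
  pose proof (Rabs_sin_mult_le m x) as H; rewrite (Rabs_right (sin x)) in H by lra.
  pose proof (Rle_abs (cos ((INR m + 2) * x) * sin (INR m * x))) as Hcs.
  rewrite Rabs_mult in Hcs; pose proof (COS_bound ((INR m + 2) * x)).
  assert (Rabs (cos ((INR m + 2) * x)) <= 1) by (apply Rabs_le; lra).
  pose proof (Rabs_pos (sin (INR m * x))); nra.
Qed.

Lemma sin_gap_odd_sub_gt0 (x : R) (m : nat) :
  0 < sin x -> (2 <= m)%nat -> 0 < sin_gap x (2 * m + 1) - sin_gap x 1.
Proof.
  intros Hs Hm; rewrite sin_gap_odd_sub.
  pose proof (Rabs_sin_mult_lt m x ltac:(lra) Hm) as H.
  rewrite (Rabs_right (sin x)) in H by lra.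
  pose proof (Rle_abs (cos ((INR m + 2) * x) * sin (INR m * x))) as Hcs.
  rewrite Rabs_mult in Hcs; pose proof (COS_bound ((INR m + 2) * x)).
  assert (Rabs (cos ((INR m + 2) * x)) <= 1) by (apply Rabs_le; lra).
  pose proof (Rabs_pos (sin (INR m * x))); nra.
Qed.

Lemma cos_eq_1_between (y : R) : 0 < y < 3 * PI -> cos y = 1 -> y = 2 * PI.
Proof.
  intros Hy Hc; pose proof (sin2_cos2 y); unfold Rsqr in *; rewrite Hc in *.
  destruct (sin_eq_0_0 y ltac:(nra)) as [k ->]; pose proof PI_RGT_0.
  assert (Hk : (0 < k < 3)%Z) by (split; apply lt_IZR; nra).
  assert (k = 1%Z \/ k = 2%Z) as [-> | ->] by lia; [|reflexivity].
  rewrite Rmult_1_l, cos_PI in Hc; lra.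
Qed.

Lemma sin_gap_3_sub_1_eq0 (x : R) :
  0 < x < PI -> sin_gap x 3 - sin_gap x 1 = 0 <-> x = 2 * PI / 3.
Proof.
  intros Hx; pose proof (sin_gt_0 x ltac:(lra) ltac:(lra)).
  rewrite (sin_gap_odd_sub x 1 : sin_gap x 3 - sin_gap x 1 = _); simpl INR; rewrite !Rmult_1_l.
  replace ((1 + 2) * x) with (3 * x) by ring.
  split.
  - intros H0; assert (Hc : cos (3 * x) = 1) by nra.
    apply cos_eq_1_between in Hc; lra.
  - intros ->; replace (3 * (2 * PI / 3)) with (2 * PI) by field.
    rewrite cos_2PI; ring.
Qed.

Lemma S_na_cauchy (n : nat) (a x : R) : (1 <= n)%nat ->
  S_na n a x = cauchy (fun k => gbinom k a) (fun j => sin (INR j * x)) n.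
Proof.
  intros Hn; unfold S_na, sum_f, cauchy.
  rewrite (decomp_sum (fun j => gbinom (n - j) a * sin (INR j * x))) by lia.
  simpl INR; rewrite Rmult_0_l, sin_0, Rmult_0_r, Rplus_0_l, Nat.sub_1_r.
  apply sum_eq; intros j Hj; rewrite Nat.add_1_r; reflexivity.
Qed.

Definition gap_tail (n : nat) (a x : R) : R :=
  sum_f_R0 (fun j => gbinom (n - j) (a - 2) * sin_gap x j) (n - 1).

Lemma S_na_sub_sin (n : nat) (a x : R) : (1 <= n)%nat ->
  2 * (1 - cos x) * (S_na n a x - sin x) = gap_tail n a x + (sin_gap x n - sin_gap x 1).
Proof.
  intros Hn.
  assert (Hconv : 2 * (1 - cos x) * S_na n a x
                  = cauchy (fun k => gbinom k (a - 2)) (sin_gap x) n).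
  { rewrite S_na_cauchy, <- cauchy_scalr by exact Hn.
    transitivity (cauchy (fun k => gbinom k a) (bdiff (bdiff (sin_gap x))) n).
    { apply cauchy_ext; intros; [reflexivity | symmetry; apply bdiff2_sin_gap]. }
    rewrite <- !cauchy_bdiff_swap; apply cauchy_ext; [intros k | reflexivity].
    rewrite (bdiff_ext _ (fun k => gbinom k (a - 1))) by apply bdiff_gbinom.
    rewrite bdiff_gbinom; f_equal; ring. }
  destruct n as [|p]; [lia|].
  unfold cauchy, gap_tail in *; rewrite tech5, Nat.sub_diag, gbinom_0 in Hconv.
  rewrite sin_gap_1, Nat.sub_1_r; simpl pred; lra.
Qed.

Lemma gap_tail_nonneg (n : nat) (a x : R) : 1 <= a -> 0 <= sin x -> 0 <= gap_tail n a x.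
Proof.
  intros Ha Hs; apply cond_pos_sum; intros j.
  apply Rmult_le_pos; [apply gbinom_nonneg; lra | apply sin_gap_nonneg, Hs].
Qed.

Lemma gap_tail_eq0 (n : nat) (a x : R) : (2 <= n)%nat -> 1 <= a -> 0 < sin x ->
  gap_tail n a x = 0 <-> a = 1.
Proof.
  intros Hn Ha Hs; unfold gap_tail; split.
  - destruct n as [|[|p]]; [lia|lia|].
    replace (S (S p) - 1)%nat with (S p) by lia.
    rewrite tech5, Nat.sub_succ_l, Nat.sub_diag, gbinom_1 by lia; intros H0.
    assert (0 <= sum_f_R0 (fun j => gbinom (S (S p) - j) (a - 2) * sin_gap x j) p).
    { apply cond_pos_sum; intros j; apply Rmult_le_pos;
        [apply gbinom_nonneg; lra | apply sin_gap_nonneg; lra]. }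
    pose proof (sin_gap_pos x (S p) Hs ltac:(lia)); nra.
  - intros ->; rewrite <- (sum_eq (fun _ => 0)), sum_cte by
      (intros j Hj; replace (n - j)%nat with (S (n - j - 1)) by lia;
       replace (1 - 2) with (-1) by ring; rewrite gbinom_m1; ring).
    ring.
Qed.

Theorem theorem3p1 (n : nat) (a x : R) :
  (1 <= n)%nat -> Nat.Odd n -> 1 <= a -> 0 < x < PI ->
  S_na n a x >= sin x /\
  (S_na n a x = sin x <-> (n = 1%nat \/ (n = 3%nat /\ a = 1 /\ x = 2 * PI / 3))).
Proof.
  intros Hn [m ->] Ha Hx.
  pose proof (sin_gt_0 x ltac:(lra) ltac:(lra)) as Hs.
  assert (Hc : cos x < 1).
  { pose proof (sin2_cos2 x); unfold Rsqr in *; pose proof (COS_bound x); nra. }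
  pose proof (S_na_sub_sin (2 * m + 1) a x Hn) as Hid.
  pose proof (gap_tail_nonneg (2 * m + 1) a x Ha ltac:(lra)) as Ht.
  pose proof (sin_gap_odd_sub_ge0 x m ltac:(lra)) as Hg.
  assert (Heq : S_na (2 * m + 1) a x = sin x <->
                gap_tail (2 * m + 1) a x = 0 /\ sin_gap x (2 * m + 1) - sin_gap x 1 = 0).
  { split.
    - intros He; rewrite He, Rminus_diag, Rmult_0_r in Hid; split; lra.
    - intros [H1 H2]; rewrite H1, H2, Rplus_0_r in Hid.
      apply Rmult_integral in Hid as [Hz | Hz]; lra. }
  split; [nra|]; rewrite Heq.
  destruct m as [|[|m]].
  - change (2 * 0 + 1)%nat with 1%nat.
    assert (gap_tail 1 a x = 0) by (unfold gap_tail; simpl; rewrite sin_gap_0; ring).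
    split; [left; reflexivity | intros _; split; lra].
  - change (2 * 1 + 1)%nat with 3%nat.
    rewrite gap_tail_eq0, sin_gap_3_sub_1_eq0 by (lia || lra).
    split; [intros; right; tauto | intros [H | H]; [discriminate | tauto]].
  - pose proof (sin_gap_odd_sub_gt0 x (S (S m)) Hs ltac:(lia)) as Hpos.
    split; [intros [_ H0]; lra | intros [H1 | [H3 _]]; lia].
Qed.
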